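(* Let $(\Omega,F,\mathbf P)$ be a non-trivial probability space and let $\psi\colon[1,\infty)\to(0,\infty)$ be a finite, continuous, strictly increasing function with $\psi(1)=\inf_{p\ge1}\psi(p)=1$. Let $q=(q(1),q(2),\dots)$ be a strictly increasing sequence of real numbers with $q(1)=1$ and $\lim_{m\to\infty}q(m)=\infty$, and put $$W[q,\psi]=\sup_{m=1,2,\dots}\frac{\psi(q(m+1))}{\psi(q(m))}.$$ Suppose $W[q,\psi]<\infty$. Then for every measurable $f\colon\Omega\to\mathbb R$, $$\|f\|G^q\psi\le\|f\|G\psi\le W[q,\psi]\,\|f\|G^q\psi,$$ where $$\|f\|G\psi=\sup_{p\ge1}\frac{|f|_p}{\psi(p)},\qquad \|f\|G^q\psi=\sup_{m=1,2,\dots}\frac{|f|_{q(m)}}{\psi(q(m))}.$$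
   Context: For a random variable $f$ on $(\Omega,F,\mathbf P)$, $|f|_p=\left(\mathbf E|f|^p\right)^{1/p}$ for $1\le p<\infty$ (possibly $+\infty$). The quantity $\|f\|G\psi$ is the Grand Lebesgue Space norm with generating function $\psi$, and $\|f\|G^q\psi$ is the discrete Grand Lebesgue Space norm. *)

From HB Require Import structures.
From mathcomp Require Import all_boot all_order all_algebra.
From mathcomp Require Import all_classical all_reals all_analysis.
Set Implicit Arguments. Unset Strict Implicit. Unset Printing Implicit Defensive.
Import Order.TTheory GRing.Theory Num.Theory numFieldNormedType.Exports.
Local Open Scope classical_set_scope.
Local Open Scope ring_scope.
Local Open Scope ereal_scope.

Definition GLnorm d (T : measurableType d) (R : realType)
  (P : probability T R) (psi : R -> R) (f : T -> R) : \bar R :=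
  ereal_sup [set 'N[P]_(p%:E)[EFin \o f] * ((psi p)^-1)%:E
            | p in [set p : R | (1 <= p)%R]].

Definition GqLnorm d (T : measurableType d) (R : realType)
  (P : probability T R) (psi : R -> R) (q : nat -> R) (f : T -> R) : \bar R :=
  ereal_sup [set 'N[P]_((q m)%:E)[EFin \o f] * ((psi (q m))^-1)%:E
            | m in [set m : nat | (0 < m)%N]].

Definition Wqpsi (R : realType) (psi : R -> R) (q : nat -> R) : \bar R :=
  ereal_sup [set ((psi (q m.+1)) / (psi (q m)))%:E
            | m in [set m : nat | (0 < m)%N]].

From HB Require Import structures.
From mathcomp Require Import all_boot all_order all_algebra.
From mathcomp Require Import all_classical all_reals all_analysis.
Set Implicit Arguments. Unset Strict Implicit. Unset Printing Implicit Defensive.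
Import Order.TTheory GRing.Theory Num.Theory numFieldNormedType.Exports.
Local Open Scope classical_set_scope.
Local Open Scope ring_scope.

(* On a probability space [|f|_p] is nondecreasing in [p] (Hoelder against the
   constant [1]).  Given [p >= 1], choose [m] with [q m <= p < q (m+1)]; then
   [|f|_p / psi p <= |f|_(q (m+1)) / psi (q m)], which is the ratio
   [psi (q (m+1)) / psi (q m) <= W] times the [(m+1)]-th term of the discrete
   norm.  The lower bound is a supremum over a subfamily. *)

Section Lnorm_probability.
Context d (T : measurableType d) (R : realType) (P : probability T R).
Variable f : T -> R.
Hypothesis mf : measurable_fun setT f.
Local Open Scope ereal_scope.

Lemma integral_powR_le (p r : R) : (0 < p)%R -> (p < r)%R ->
  \int[P]_x (`|f x| `^ p)%:E <= (\int[P]_x (`|f x| `^ r)%:E) `^ (p / r).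
Proof.
move=> p0 pr; have r0 : (0 < r)%R := lt_trans p0 pr.
pose s := (r / p)%R; pose s' := (1 - s^-1)^-1%R.
have s0 : (0 < s)%R by rewrite divr_gt0.
have s'0 : (0 < s')%R.
  by rewrite invr_gt0 subr_gt0 invf_lt1 // ltr_pdivlMr // mul1r.
have ss' : (s^-1 + s'^-1 = 1)%R by rewrite invrK subrKC.
have mfp : measurable_fun [set: T] (fun x => `|f x| `^ p)%R.
  apply: (@measurableT_comp _ _ _ _ _ _ (@powR R ^~ p)) => //.
  exact: measurableT_comp.
have := hoelder P mfp (@measurable_cst _ _ T R setT 1%R) s0 s'0 ss'.
rewrite Lnorm_cst1 (_ : P [set: T] `^ s'^-1 = 1); last first.
  by rewrite probability_setT poweR1r.
rewrite mule1 unlock /Lnorm invr1 poweRe1; last first.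
  by apply: integral_ge0 => x _; rewrite lee_fin.
under eq_integral do
  rewrite /= mulr1 ger0_norm ?powR_ge0 // powRr1 ?powR_ge0 //.
under [in leRHS]eq_integral do
  rewrite /= ger0_norm ?powR_ge0 // -powRrM /s mulrCA divff ?gt_eqF // mulr1.
by rewrite /s invf_div.
Qed.

Lemma Lnorm_le_exponent (p r : R) : (0 < p)%R -> (p <= r)%R ->
  'N[P]_p%:E[EFin \o f] <= 'N[P]_r%:E[EFin \o f].
Proof.
move=> p0; rewrite le_eqVlt => /predU1P[->//|pr].
rewrite unlock /Lnorm.
under eq_integral do rewrite /=.
under [in leRHS]eq_integral do rewrite /=.
apply: (le_trans (gt0_ler_poweR _ _ _ (integral_powR_le p0 pr))).
- by rewrite invr_ge0 ltW.
- by rewrite in_itv /= leey integral_ge0 // => x _; rewrite lee_fin powR_ge0.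
- by rewrite in_itv /= poweR_ge0 leey.
by rewrite -poweRrM mulrAC divff ?gt_eqF // mul1r.
Qed.

End Lnorm_probability.

Lemma cvgy_bracket (R : realType) (q : nat -> R) (p : R) :
  q @ \oo --> +oo -> q 1%N <= p -> exists2 m, (0 < m)%N & q m <= p < q m.+1.
Proof.
move=> qoo q1p; have [N _ qN] := cvgry_gt qoo p.
have : exists n, (0 < n)%N && (p < q n) by exists N.+1; rewrite qN /=.
case/ex_minnP => -[|[|m]] /andP[// _ pqn] nmin.
  by move: pqn; rewrite ltNge q1p.
exists m.+1 => //; rewrite pqn andbT leNgt; apply/negP => pqm.
by have := nmin m.+1; rewrite pqm ltnn => /(_ isT).
Qed.

Section grand_lebesgue.
Context d (T : measurableType d) (R : realType) (P : probability T R).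
Variables (psi : R -> R) (q : nat -> R).
Hypothesis q_ge1 : forall m, (0 < m)%N -> 1 <= q m.
Hypothesis psi_gt0 : forall p, 1 <= p -> 0 < psi p.
Hypothesis psi_homo : {in [set p : R | 1 <= p] &, {homo psi : x y / x <= y}}.
Local Open Scope ereal_scope.

Lemma GqLnorm_le_GLnorm (f : T -> R) : GqLnorm P psi q f <= GLnorm P psi f.
Proof.
by apply: ereal_sup_le => _ [m m0 <-]; exists (q m) => //; exact: q_ge1.
Qed.

Variable f : T -> R.
Hypothesis mf : measurable_fun setT f.

Lemma Lnorm_div_psi_le (m : nat) (p : R) :
  (0 < m)%N -> (q m <= p)%R -> (p <= q m.+1)%R ->
  'N[P]_p%:E[EFin \o f] * (psi p)^-1%:E <=
  (psi (q m.+1) / psi (q m))%:E *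
    ('N[P]_(q m.+1)%:E[EFin \o f] * (psi (q m.+1))^-1%:E).
Proof.
move=> m0 qmp pqm; have qm_ge1 := q_ge1 m0.
have p1 : (1 <= p)%R := le_trans qm_ge1 qmp.
have qSm_ge1 : (1 <= q m.+1)%R := le_trans p1 pqm.
rewrite muleCA -EFinM mulrAC mulfV ?gt_eqF ?psi_gt0 // mul1r.
apply: lee_pmul.
- exact: Lnorm_ge0.
- by rewrite lee_fin invr_ge0 ltW // psi_gt0.
- by apply: Lnorm_le_exponent => //; rewrite (lt_le_trans ltr01).
- by rewrite lee_fin lef_pV2 ?posrE ?psi_gt0 //; apply: psi_homo; rewrite ?inE.
Qed.

Lemma GLnorm_le_Wqpsi_GqLnorm : q 1%N = 1%R -> q @ \oo --> +oo%R ->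
  GLnorm P psi f <= Wqpsi psi q * GqLnorm P psi q f.
Proof.
move=> q1 qoo; apply: ge_ereal_sup => _ [p p1 <-].
have [|m m0 /andP[qmp pqm]] := cvgy_bracket qoo (_ : q 1%N <= p)%R.
  by rewrite q1.
apply: (le_trans (Lnorm_div_psi_le m0 qmp (ltW pqm))).
apply: lee_pmul.
- by rewrite lee_fin divr_ge0 // ltW // psi_gt0 // q_ge1.
- by rewrite mule_ge0 ?Lnorm_ge0 // lee_fin invr_ge0 ltW // psi_gt0 // q_ge1.
- by apply: ereal_sup_ubound; exists m.
- by apply: ereal_sup_ubound; exists m.+1.
Qed.

End grand_lebesgue.

Theorem theorem2p1 (d : measure_display) (T : measurableType d) (R : realType)
  (P : probability T R) (psi : R -> R) (q : nat -> R) :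
  (exists A : set T, measurable A /\ (0 < P A)%E /\ (P A < 1)%E) ->
  {within [set p : R | 1 <= p], continuous psi} ->
  (forall p, 1 <= p -> 0 < psi p) ->
  {in [set p : R | 1 <= p] &, {mono psi : x y / x < y}} ->
  psi 1 = 1 ->
  (forall p, 1 <= p -> psi 1 <= psi p) ->
  q 1%N = 1 ->
  (forall m : nat, (0 < m)%N -> q m < q m.+1) ->
  q @ \oo --> +oo ->
  (Wqpsi psi q < +oo)%E ->
  forall f : T -> R, measurable_fun setT f ->
    (GqLnorm P psi q f <= GLnorm P psi f)%E /\
    (GLnorm P psi f <= Wqpsi psi q * GqLnorm P psi q f)%E.
Proof.
move=> _ _ psi_gt0 psi_mono _ _ q1 q_incr qoo _ f mf.
have q_ge1 : forall m, (0 < m)%N -> 1 <= q m.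
  elim=> // -[_ _|m IH _]; first by rewrite q1.
  by rewrite (le_trans (IH isT)) // ltW // q_incr.
split; first exact: GqLnorm_le_GLnorm.
have psi_homo : {in [set p : R | 1 <= p] &, {homo psi : x y / x <= y}}.
  exact: ltW_homo_in (monoW_in psi_mono).
exact: GLnorm_le_Wqpsi_GqLnorm q_ge1 psi_gt0 psi_homo _ mf q1 qoo.
Qed.
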